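(* Let $G$ be a finite simple graph that contains no induced subgraph isomorphic to a banner or to $C_5$. Suppose $G$ contains an odd antihole $A$ (as an induced subgraph) such that (i) $\alpha(G) \geq 3$, and (ii) no co-triangle of $G$ contains two vertices of $A$. Then the complement $\overline{G}$ of $G$ has a connected component $O$ that contains all vertices of $A$ and is triangle-free.
   Context: A hole is a chordless (induced) cycle with at least four vertices; it is odd if it has an odd number of vertices. An antihole is the complement of a hole; an odd antihole is the complement of an odd hole. $C_k$ denotes the chordless cycle on $k$ vertices. A banner is the graph consisting of a hole on four vertices together with one additional vertex adjacent to exactly one vertex of that hole. A co-triangle is a set of three pairwise non-adjacent vertices (the complement of a triangle). $\alpha(G)$ denotes the maximum size of a stable set of $G$. ''Contains'' means contains as an induced subgraph. *)

From mathcomp Require Import all_boot.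
Set Implicit Arguments. Unset Strict Implicit. Unset Printing Implicit Defensive.

Definition simple_graph (T : finType) (adj : rel T) : Prop :=
  symmetric adj /\ irreflexive adj.

Definition compl_adj (T : finType) (adj : rel T) : rel T :=
  fun x y => (x != y) && ~~ adj x y.

Definition induced_copy (P T : finType) (e : rel P) (adj : rel T) (f : P -> T) : Prop :=
  injective f /\ forall u v, adj (f u) (f v) = e u v.

Definition contains (P T : finType) (e : rel P) (adj : rel T) : Prop :=
  exists f : P -> T, induced_copy e adj f.

Definition cycle_adj (k : nat) : rel 'I_k :=
  fun i j => (j == (i.+1 %% k) :> nat) || (i == (j.+1 %% k) :> nat).

Arguments cycle_adj k : clear implicits.

(* Banner: 4-hole 0-1-2-3-0 plus vertex 4 adjacent only to 0. *)
Definition banner_adj : rel 'I_5 :=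
  fun i j =>
    let a := nat_of_ord i in let b := nat_of_ord j in
    [|| (a == 0) && (b == 1), (a == 1) && (b == 0),
        (a == 1) && (b == 2), (a == 2) && (b == 1),
        (a == 2) && (b == 3), (a == 3) && (b == 2),
        (a == 3) && (b == 0), (a == 0) && (b == 3),
        (a == 0) && (b == 4) | (a == 4) && (b == 0)].

Definition odd_antihole (T : finType) (adj : rel T) (A : {set T}) : Prop :=
  exists k, exists f : 'I_k -> T,
    [/\ 5 <= k, odd k, A = f @: setT &
        induced_copy (compl_adj (cycle_adj k)) adj f].

Definition stable (T : finType) (adj : rel T) (S : {set T}) : bool :=
  [forall x in S, forall y in S, ~~ adj x y].

Definition alpha_ge3 (T : finType) (adj : rel T) : Prop :=
  exists S : {set T}, stable adj S && (#|S| == 3).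

Definition cotriangle (T : finType) (adj : rel T) (x y z : T) : bool :=
  [&& x != y, y != z, x != z, ~~ adj x y, ~~ adj y z & ~~ adj x z].

Definition component (T : finType) (e : rel T) (O : {set T}) : Prop :=
  exists x : T, O = [set y | connect e x y].

Definition triangle_free_on (T : finType) (e : rel T) (O : {set T}) : Prop :=
  forall x y z, x \in O -> y \in O -> z \in O ->
    ~~ [&& e x y, e y z & e x z].

From mathcomp Require Import all_boot zmodp zify.
Set Implicit Arguments. Unset Strict Implicit. Unset Printing Implicit Defensive.

(* Work in the complement H of G, where A is an odd hole C_k.  Since G has no
   banner, H has no cobanner: a triangle t a b with a pendant path t - u - w,
   u and w having no other neighbour among t, a, b, u, w.  Since C5 is
   self-complementary, H has no induced C5.  Hypothesis (ii) says that no edge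
   of the hole lies in a triangle of H.  Stepping two places along the hole,
   which by oddness reaches every vertex, the two exclusions carry a triangle
   through a hole vertex, or through a neighbour of one, onto a hole edge; so
   neither exists.  A triangle at a vertex v further away, together with the
   last two steps u, w of a path from the hole to v, is a cobanner: any extra
   edge would put a triangle at a vertex closer to the hole. *)

Lemma induced_copy_compl (P T : finType) (e : rel P) (adj : rel T) (f : P -> T) :
  irreflexive e -> irreflexive adj ->
  induced_copy (compl_adj e) (compl_adj adj) f <-> induced_copy e adj f.
Proof.
move=> e_irr adj_irr; split=> -[f_inj f_adj]; split=> // u v.
  have := f_adj u v; rewrite /compl_adj (inj_eq f_inj).
  by case: eqVneq => [-> _|_ /negb_inj //]; rewrite e_irr adj_irr.
by rewrite /compl_adj (inj_eq f_inj) f_adj.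
Qed.

Lemma compl_adj_sym (P : finType) (e : rel P) :
  symmetric e -> symmetric (compl_adj e).
Proof. by move=> e_sym x y; rewrite /compl_adj eq_sym e_sym. Qed.

Lemma compl_adj_irr (P : finType) (e : rel P) : irreflexive (compl_adj e).
Proof. by move=> x; rewrite /compl_adj eqxx. Qed.

Lemma compl_triangle_cotriangle (P : finType) (e : rel P) x y z :
  compl_adj e x y -> compl_adj e y z -> compl_adj e x z -> cotriangle e x y z.
Proof. by rewrite /cotriangle => /andP[-> ->] /andP[-> ->] /andP[-> ->]. Qed.

Lemma compl_adjK (P : finType) (e : rel P) :
  irreflexive e -> compl_adj (compl_adj e) =2 e.
Proof.
by move=> e_irr x y; rewrite /compl_adj; case: eqVneq => [->|] //=; rewrite ?e_irr ?negbK.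
Qed.

Definition twin_free (P : finType) (e : rel P) : Prop :=
  forall i j, (forall k, e i k = e j k) -> i = j.

Lemma induced_copy_twin_free (P T : finType) (e : rel P) (H : rel T) (f : P -> T) :
  twin_free e -> (forall u v, H (f u) (f v) = e u v) -> induced_copy e H f.
Proof. by move=> e_tf fH; split=> // u v fuv; apply: e_tf => k; rewrite -!fH fuv. Qed.

Lemma cycle_adj_inZp n m d : 4 <= n -> d <= 3 ->
  cycle_adj n.+1 (inZp m) (inZp (m + d)) = (d == 1).
Proof.
move=> n4 d3; set k := n.+1; rewrite /cycle_adj /=.
rewrite -[(m %% k).+1]addn1 -[((m + d) %% k).+1]addn1 !modnDml.
rewrite -addnA -{3}[m]addn0 !eqn_modDl mod0n addn1 !modn_small ?orbF //; lia.
Qed.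

Lemma cycle_adj_irr n : 4 <= n -> irreflexive (cycle_adj n.+1).
Proof. by move=> n4 i; rewrite -[i]valZpK -{2}[val i]addn0 cycle_adj_inZp. Qed.

Ltac case_ord5 := case=> [[|[|[|[|[|//]]]]] ?].

Ltac twin_free_ord5 :=
  do 2!case_ord5;
  first [ by move=> _; apply: val_inj
        | by move/(_ (@Ordinal 5 0 isT)) | by move/(_ (@Ordinal 5 1 isT))
        | by move/(_ (@Ordinal 5 2 isT)) | by move/(_ (@Ordinal 5 3 isT))
        | by move/(_ (@Ordinal 5 4 isT)) ].

Lemma cobanner_twin_free : twin_free (compl_adj banner_adj).
Proof. twin_free_ord5. Qed.

Lemma coC5_twin_free : twin_free (compl_adj (cycle_adj 5)).
Proof. twin_free_ord5. Qed.

Lemma banner_irr : irreflexive banner_adj.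
Proof. by case_ord5. Qed.

Ltac check_pattern_ord5 H_sym H_irr :=
  do 2!case_ord5; rewrite /= ?H_irr //;
  first [ by apply/negbTE | by apply/negbTE; rewrite H_sym | by rewrite H_sym ].

Lemma contains_cobanner (T : finType) (H : rel T) (t a b u w : T) :
  symmetric H -> irreflexive H ->
  H t a -> H t b -> H a b -> H u t -> ~~ H u a -> ~~ H u b ->
  H w u -> ~~ H w t -> ~~ H w a -> ~~ H w b ->
  contains (compl_adj banner_adj) H.
Proof.
move=> H_sym H_irr *; exists (fun i : 'I_5 => nth t [:: w; a; u; b; t] i).
by apply: induced_copy_twin_free cobanner_twin_free _; check_pattern_ord5 H_sym H_irr.
Qed.

Lemma contains_coC5 (T : finType) (H : rel T) (v0 v1 v2 v3 v4 : T) :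
  symmetric H -> irreflexive H ->
  H v0 v1 -> H v1 v2 -> H v2 v3 -> H v3 v4 -> H v4 v0 ->
  ~~ H v0 v2 -> ~~ H v0 v3 -> ~~ H v1 v3 -> ~~ H v1 v4 -> ~~ H v2 v4 ->
  contains (compl_adj (cycle_adj 5)) H.
Proof.
(* Self-complementarity of C5: the H-cycle read in the order v0 v2 v4 v1 v3. *)
move=> H_sym H_irr *; exists (fun i : 'I_5 => nth v0 [:: v0; v2; v4; v1; v3] i).
by apply: induced_copy_twin_free coC5_twin_free _; check_pattern_ord5 H_sym H_irr.
Qed.

Section OddHoleComponent.

Variables (T : finType) (H : rel T) (c : nat -> T).
Hypotheses (H_sym : symmetric H) (H_irr : irreflexive H).
Hypothesis no_cobanner : ~ contains (compl_adj banner_adj) H.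
Hypothesis no_coC5 : ~ contains (compl_adj (cycle_adj 5)) H.
Hypothesis cycle_edge : forall m, H (c m) (c m.+1).
Hypothesis cycle_nonedge2 : forall m, ~~ H (c m) (c m.+2).
Hypothesis cycle_nonedge3 : forall m, ~~ H (c m) (c m.+3).
Hypothesis cycle_odd : forall m, exists j, c (m + j.*2) = c m.+1.
Hypothesis cycle_edge_no_triangle : forall m z, H (c m) z -> H (c m.+1) z -> False.

Lemma cobanner_free t a b u w :
  H t a -> H t b -> H a b -> H u t -> ~~ H u a -> ~~ H u b ->
  H w u -> ~~ H w t -> ~~ H w a -> ~~ H w b -> False.
Proof.
move=> hta htb hab hut nua nub hwu nwt nwa nwb; apply: no_cobanner.
exact: contains_cobanner H_sym H_irr hta htb hab hut nua nub hwu nwt nwa nwb.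
Qed.

Lemma C5_free v0 v1 v2 v3 v4 :
  H v0 v1 -> H v1 v2 -> H v2 v3 -> H v3 v4 -> H v4 v0 ->
  ~~ H v0 v2 -> ~~ H v0 v3 -> ~~ H v1 v3 -> ~~ H v1 v4 -> ~~ H v2 v4 -> False.
Proof.
move=> h01 h12 h23 h34 h40 n02 n03 n13 n14 n24; apply: no_coC5.
exact: contains_coC5 H_sym H_irr h01 h12 h23 h34 h40 n02 n03 n13 n14 n24.
Qed.

Lemma cycle_edge_nbr m z : H (c m) z -> ~~ H (c m.+1) z.
Proof. by move=> hm; apply/negP; apply: cycle_edge_no_triangle hm. Qed.

Lemma cycle_no_common_nbr3 a n : H (c n) a -> ~~ H (c n.+3) a.
Proof.
move=> h0; apply/negP => h3.
have n1 := cycle_edge_nbr h0.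
have n2 : ~~ H (c n.+2) a.
  by apply/negP => h2; apply: cycle_edge_no_triangle h2 h3.
apply: (C5_free (v0 := a) _ (cycle_edge n) (cycle_edge n.+1) (cycle_edge n.+2));
  by rewrite // H_sym.
Qed.

Lemma cycle_triangle_shift2 i a b :
  H (c i) a -> H (c i) b -> H a b -> H (c i.+2) a -> H (c i.+2) b.
Proof.
move=> ha hb hab h2a; apply/idPn => nb.
apply: (cobanner_free (b := c i) hab _ _ h2a nb _ _
          (cycle_edge_nbr h2a) (cycle_no_common_nbr3 hb));
  by rewrite H_sym.
Qed.

Lemma cycle_not_in_triangle n a b : H (c n) a -> H (c n) b -> H a b -> False.
Proof.
move=> ha hb hab.
have shift j : H (c (n + j.*2)) a && H (c (n + j.*2)) b.
  elim: j => [|j /andP[hia hib]]; first by rewrite addn0 ha hb.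
  rewrite doubleS !addnS; set i := n + j.*2 in hia hib *.
  have : H (c i.+2) a || H (c i.+2) b.
    apply/norP => -[na nb].
    apply: (cobanner_free hia hib hab _ (cycle_edge_nbr hia) (cycle_edge_nbr hib) _ _ na nb);
      by rewrite H_sym.
  case/orP=> h; first by rewrite h (cycle_triangle_shift2 hia hib hab h).
  by rewrite h (cycle_triangle_shift2 hib hia _ h) // H_sym.
have [j cj] := cycle_odd n.
by case/andP: (shift j); rewrite cj => h1 _; apply: cycle_edge_no_triangle ha h1.
Qed.

Lemma triangle_nbr_shift x y z m :
  H x y -> H x z -> H y z -> H (c m) x -> H (c m.+1) y || H (c m.+1) z.
Proof.
move=> hxy hxz hyz hm; apply/norP => -[ny nz].
apply: (cobanner_free hxy hxz hyz hm _ _ _ (cycle_edge_nbr hm) ny nz).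
- by apply/negP => h; apply: cycle_not_in_triangle hm h hxy.
- by apply/negP => h; apply: cycle_not_in_triangle hm h hxz.
- by rewrite H_sym.
Qed.

Lemma triangle_edge_skip2 x y m : H x y -> H (c m) x -> H (c m.+2) y -> False.
Proof.
move=> hxy hm h2.
apply: (C5_free (v0 := x) (v4 := y) _ (cycle_edge m) (cycle_edge m.+1) h2 _ _ _
          (cycle_nonedge2 m)).
- by rewrite H_sym.
- by rewrite H_sym.
- by rewrite H_sym; apply: cycle_edge_nbr hm.
- by apply/negP => h; apply: (cycle_not_in_triangle _ h2 hxy); rewrite H_sym.
- by apply/negP => h; apply: cycle_not_in_triangle hm h hxy.
- by apply/negP => h; apply: cycle_edge_no_triangle h h2.
Qed.

Lemma cycle_nbr_not_in_triangle n t a b : H (c n) t -> H t a -> H t b -> H a b -> False.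
Proof.
move=> hn hta htb hab.
have [hat hbt hba] : [/\ H a t, H b t & H b a] by split; rewrite H_sym.
have shift j : H (c (n + j.*2)) t.
  elim: j => [|j hi]; first by rewrite addn0.
  rewrite doubleS !addnS; set i := n + j.*2 in hi *.
  case/orP: (triangle_nbr_shift hta htb hab hi) => h1.
    case/orP: (triangle_nbr_shift hat hab htb h1) => // h2.
    by case: (triangle_edge_skip2 htb hi h2).
  case/orP: (triangle_nbr_shift hbt hba hta h1) => // h2.
  by case: (triangle_edge_skip2 hta hi h2).
have [j cj] := cycle_odd n.
by have := shift j; rewrite cj; apply: cycle_edge_no_triangle hn.
Qed.

Fixpoint near_cycle (n : nat) (v : T) : Prop :=
  if n is n'.+1 then near_cycle n' v \/ exists2 u, near_cycle n' u & H u v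
  else exists m, v = c m.

Lemma near_cycle_not_in_triangle n v x y :
  near_cycle n v -> H v x -> H v y -> H x y -> False.
Proof.
elim: n v x y => [|n IH] v x y /=.
  by case=> m ->; apply: cycle_not_in_triangle.
case=> [nv|[u nu huv]] hvx hvy hxy; first exact: IH nv hvx hvy hxy.
have nux : ~~ H u x by apply/negP => h; apply: IH nu huv h hvx.
have nuy : ~~ H u y by apply/negP => h; apply: IH nu huv h hvy.
case: n IH nu => [|n] IH /= nu.
  case: nu => m eu.
  by apply: (cycle_nbr_not_in_triangle (n := m) _ hvx hvy hxy); rewrite -eu.
case: nu => [nu|[w nw hwu]].
  by apply: (IH v x y _ hvx hvy hxy); right; exists u.
have near_w z : H w z -> near_cycle n.+1 z by move=> hwz; right; exists w.
have nwv : ~~ H w v by apply/negP => /near_w nv; apply: IH nv hvx hvy hxy.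
have nwx : ~~ H w x by apply/negP => /near_w nx; apply: IH nx _ hxy hvy; rewrite H_sym.
have nwy : ~~ H w y by apply/negP => /near_w ny; apply: IH ny _ _ hvx; rewrite H_sym.
exact: cobanner_free hvx hvy hxy huv nux nuy hwu nwv nwx nwy.
Qed.

Lemma near_cycle_path n x p :
  near_cycle n x -> path H x p -> near_cycle (n + size p) (last x p).
Proof.
elim: p n x => [|y p IH] n x /=; first by rewrite addn0.
move=> nx /andP[hxy hp]; rewrite addnS -addSn; apply: IH hp.
by right; exists x.
Qed.

Lemma connect_cycle m : connect H (c 0) (c m).
Proof.
elim: m => [|m IH]; first exact: connect0.
exact: connect_trans IH (connect1 (cycle_edge m)).
Qed.

Lemma connect_cycle_triangle_free : triangle_free_on H [set v | connect H (c 0) v].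
Proof.
move=> x y z; rewrite inE => /connectP[p hp ->] _ _; apply/and3P => -[hxy hyz hxz].
by apply: (near_cycle_not_in_triangle (near_cycle_path (n := 0) _ hp) hxy hxz hyz); exists 0.
Qed.

End OddHoleComponent.

Theorem lemma2 (T : finType) (adj : rel T) (A : {set T}) :
  simple_graph adj ->
  ~ contains banner_adj adj ->
  ~ contains (cycle_adj 5) adj ->
  odd_antihole adj A ->
  alpha_ge3 adj ->
  (forall x y z, cotriangle adj x y z ->
     ~ [\/ (x \in A) && (y \in A), (y \in A) && (z \in A) | (x \in A) && (z \in A)]) ->
  exists O : {set T},
    [/\ component (compl_adj adj) O, A \subset O &
        triangle_free_on (compl_adj adj) O].
Proof.
move=> [adj_sym adj_irr] no_banner no_C5 [[|n] [f [k5 k_odd -> f_copy]]] _ no_cotri //.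
have n4 : 4 <= n := k5.
set H := compl_adj adj.
have no_cobanner : ~ contains (compl_adj banner_adj) H.
  by case=> g /(induced_copy_compl _ banner_irr adj_irr) g_copy; apply: no_banner; exists g.
have no_coC5 : ~ contains (compl_adj (cycle_adj 5)) H.
  by case=> g /(induced_copy_compl _ (cycle_adj_irr (isT : 4 <= 4)) adj_irr) g_copy;
    apply: no_C5; exists g.
have fH i j : H (f i) (f j) = cycle_adj n.+1 i j.
  rewrite /H; have [_ ->] := (induced_copy_compl f (compl_adj_irr _) adj_irr).2 f_copy.
  exact: compl_adjK (cycle_adj_irr n4) i j.
pose c m := f (inZp m).
have cA m : c m \in f @: setT by apply: imset_f.
have edge m : H (c m) (c m.+1) by rewrite fH -[m.+1]addn1 cycle_adj_inZp.
have nonedge2 m : ~~ H (c m) (c m.+2) by rewrite fH -[m.+2]addn2 cycle_adj_inZp.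
have nonedge3 m : ~~ H (c m) (c m.+3) by rewrite fH -[m.+3]addn3 cycle_adj_inZp.
have odd_period m : exists j, c (m + j.*2) = c m.+1.
  have n_half : n./2.*2 = n by rewrite -[RHS]odd_double_half; move: k_odd => /= /negbTE ->.
  by exists n./2.+1; congr f; apply: val_inj; rewrite /= doubleS n_half -addSnnS modnDr.
have edge_no_triangle m z : H (c m) z -> H (c m.+1) z -> False.
  move=> hmz hm1z; apply: (no_cotri _ _ _ (compl_triangle_cotriangle (edge m) hm1z hmz)).
  by apply: Or31; rewrite !cA.
exists [set v | connect H (c 0) v]; split.
- by exists (c 0).
- by apply/subsetP => _ /imsetP[i _ ->]; rewrite inE -(valZpK i); apply: connect_cycle.
- exact: (connect_cycle_triangle_free (compl_adj_sym adj_sym) (compl_adj_irr adj)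
          no_cobanner no_coC5 edge nonedge2 nonedge3 odd_period edge_no_triangle).
Qed.
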